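(* A cartesian bicategory $\mathcal{C}$ is functionally complete if and only if the elementary and existential doctrine $\mathcal{C}[-,I]:\mathsf{Map}(\mathcal{C})^{op}\to\mathsf{InfSl}$ has full comprehensions.
   Context: Composition in diagrammatic order. A cartesian bicategory is a poset-enriched symmetric monoidal category $(\mathcal{C},\otimes,I)$ with, for each $X$, commutative comonoid $(\mathrm{copy}_X,\mathrm{disc}_X)$ and monoid $(\mathrm{cocopy}_X,\mathrm{codisc}_X)$ forming special Frobenius bimonoids, comonoid left adjoint to monoid, every arrow $c$ satisfying $c;\mathrm{copy}\le\mathrm{copy};(c\otimes c)$ and $c;\mathrm{disc}\le\mathrm{disc}$, and standard coherence. A map is an arrow $f$ with $f;\mathrm{copy}=\mathrm{copy};(f\otimes f)$ and $f;\mathrm{disc}=\mathrm{disc}$; maps form a category $\mathsf{Map}(\mathcal{C})$ with finite products. The converse of $c:X\to Y$ is $c^\dagger=(\mathrm{id}_Y\otimes(\mathrm{codisc}_X;\mathrm{copy}_X));(\mathrm{id}_Y\otimes c\otimes\mathrm{id}_X);((\mathrm{cocopy}_Y;\mathrm{disc}_Y)\otimes\mathrm{id}_X):Y\to X$. The functor $\mathcal{C}[-,I]$ sends $X$ to $\mathcal{C}[X,I]$ and a map $f$ to $c\mapsto f;c$; it is an elementary and existential doctrine. $\mathcal{C}$ is functionally complete if for every $r:X\to I$ there is a map $i:X_r\to X$ (a tabulation of $r$) with $i;i^\dagger=\mathrm{id}_{X_r}$ and $i^\dagger;\mathrm{disc}_{X_r}=r$. For a doctrine $P:\mathcal{C}^{op}\to\mathsf{InfSl}$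 and $\alpha\in P(X)$, a comprehension of $\alpha$ is an arrow $\{\alpha\}:X_\alpha\to X$ with $P_{\{\alpha\}}(\alpha)=\top$ such that every $f:Y\to X$ with $P_f(\alpha)=\top_Y$ factors uniquely as $f=g;\{\alpha\}$. $P$ has full comprehensions if every element has a comprehension and $\alpha\le\beta$ whenever $\{\alpha\}$ factors through $\{\beta\}$. *)

Declare Scope cb_scope.
Open Scope cb_scope.

(* Poset-enriched symmetric monoidal category.  Composition is written in
   diagrammatic order: [comp f g] = f ; g. *)
Record PSMC := {
  ob : Type;
  hom : ob -> ob -> Type;
  le : forall {X Y : ob}, hom X Y -> hom X Y -> Prop;
  le_refl : forall X Y (f : hom X Y), le f f;
  le_trans : forall X Y (f g h : hom X Y), le f g -> le g h -> le f h;
  le_antisym : forall X Y (f g : hom X Y), le f g -> le g f -> f = g;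
  idm : forall X, hom X X;
  comp : forall {X Y Z : ob}, hom X Y -> hom Y Z -> hom X Z;
  comp_idl : forall X Y (f : hom X Y), comp (idm X) f = f;
  comp_idr : forall X Y (f : hom X Y), comp f (idm Y) = f;
  comp_assoc : forall X Y Z W (f : hom X Y) (g : hom Y Z) (h : hom Z W),
      comp (comp f g) h = comp f (comp g h);
  comp_mono : forall X Y Z (f f' : hom X Y) (g g' : hom Y Z),
      le f f' -> le g g' -> le (comp f g) (comp f' g');
  tens : ob -> ob -> ob;
  unit : ob;
  tensh : forall {X Y X' Y' : ob}, hom X Y -> hom X' Y' -> hom (tens X X') (tens Y Y');
  tensh_id : forall X Y, tensh (idm X) (idm Y) = idm (tens X Y);
  tensh_comp : forall X Y Z X' Y' Z' (f : hom X Y) (g : hom Y Z)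
      (f' : hom X' Y') (g' : hom Y' Z'),
      tensh (comp f g) (comp f' g') = comp (tensh f f') (tensh g g');
  tensh_mono : forall X Y X' Y' (f g : hom X Y) (f' g' : hom X' Y'),
      le f g -> le f' g' -> le (tensh f f') (tensh g g');
  assoc : forall X Y Z, hom (tens (tens X Y) Z) (tens X (tens Y Z));
  assoc_inv : forall X Y Z, hom (tens X (tens Y Z)) (tens (tens X Y) Z);
  assoc_iso1 : forall X Y Z, comp (assoc X Y Z) (assoc_inv X Y Z) = idm _;
  assoc_iso2 : forall X Y Z, comp (assoc_inv X Y Z) (assoc X Y Z) = idm _;
  assoc_nat : forall X Y Z X' Y' Z' (f : hom X X') (g : hom Y Y') (h : hom Z Z'),
      comp (tensh (tensh f g) h) (assoc X' Y' Z')
      = comp (assoc X Y Z) (tensh f (tensh g h));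
  lunit : forall X, hom (tens unit X) X;
  lunit_inv : forall X, hom X (tens unit X);
  lunit_iso1 : forall X, comp (lunit X) (lunit_inv X) = idm _;
  lunit_iso2 : forall X, comp (lunit_inv X) (lunit X) = idm _;
  lunit_nat : forall X Y (f : hom X Y),
      comp (tensh (idm unit) f) (lunit Y) = comp (lunit X) f;
  runit : forall X, hom (tens X unit) X;
  runit_inv : forall X, hom X (tens X unit);
  runit_iso1 : forall X, comp (runit X) (runit_inv X) = idm _;
  runit_iso2 : forall X, comp (runit_inv X) (runit X) = idm _;
  runit_nat : forall X Y (f : hom X Y),
      comp (tensh f (idm unit)) (runit Y) = comp (runit X) f;
  sym : forall X Y, hom (tens X Y) (tens Y X);
  sym_inv : forall X Y, comp (sym X Y) (sym Y X) = idm _;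
  sym_nat : forall X Y X' Y' (f : hom X X') (g : hom Y Y'),
      comp (tensh f g) (sym X' Y') = comp (sym X Y) (tensh g f);
  pentagon : forall W X Y Z,
      comp (assoc (tens W X) Y Z) (assoc W X (tens Y Z))
      = comp (comp (tensh (assoc W X Y) (idm Z)) (assoc W (tens X Y) Z))
             (tensh (idm W) (assoc X Y Z));
  triangle : forall X Y,
      comp (assoc X unit Y) (tensh (idm X) (lunit Y)) = tensh (runit X) (idm Y);
  hexagon : forall X Y Z,
      comp (comp (assoc X Y Z) (sym X (tens Y Z))) (assoc Y Z X)
      = comp (comp (tensh (sym X Y) (idm Z)) (assoc Y X Z)) (tensh (idm Y) (sym X Z))
}.

Arguments le {p X Y}.
Arguments comp {p X Y Z}.
Arguments tensh {p X Y X' Y'}.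
Arguments idm {p}.
Arguments tens {p}.
Arguments unit {p}.
Arguments assoc {p}.
Arguments assoc_inv {p}.
Arguments lunit {p}.
Arguments lunit_inv {p}.
Arguments runit {p}.
Arguments runit_inv {p}.
Arguments sym {p}.

Notation "f ;; g" := (comp f g) (at level 50, left associativity) : cb_scope.
Notation "f ** g" := (tensh f g) (at level 40, left associativity) : cb_scope.
Notation "X (x) Y" := (tens X Y) (at level 40, left associativity) : cb_scope.

Definition mid (C : PSMC) (X Y : ob C) :
  hom C ((X (x) X) (x) (Y (x) Y)) ((X (x) Y) (x) (X (x) Y)) :=
  assoc X X (Y (x) Y)
  ;; (idm X ** assoc_inv X Y Y)
  ;; (idm X ** (sym X Y ** idm Y))
  ;; (idm X ** assoc Y X Y)
  ;; assoc_inv X Y (X (x) Y).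

Definition midinv (C : PSMC) (X Y : ob C) :
  hom C ((X (x) Y) (x) (X (x) Y)) ((X (x) X) (x) (Y (x) Y)) :=
  assoc X Y (X (x) Y)
  ;; (idm X ** assoc_inv Y X Y)
  ;; (idm X ** (sym Y X ** idm Y))
  ;; (idm X ** assoc X Y Y)
  ;; assoc_inv X X (Y (x) Y).

Record CartBicat := {
  base :> PSMC;
  copy : forall X : ob base, hom base X (X (x) X);
  disc : forall X : ob base, hom base X unit;
  cocopy : forall X : ob base, hom base (X (x) X) X;
  codisc : forall X : ob base, hom base unit X;
  copy_coassoc : forall X, copy X ;; (copy X ** idm X) ;; assoc X X X
                           = copy X ;; (idm X ** copy X);
  copy_counitl : forall X, copy X ;; (disc X ** idm X) ;; lunit X = idm X;
  copy_counitr : forall X, copy X ;; (idm X ** disc X) ;; runit X = idm X;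
  copy_comm : forall X, copy X ;; sym X X = copy X;
  cocopy_assoc : forall X, (cocopy X ** idm X) ;; cocopy X
                           = assoc X X X ;; (idm X ** cocopy X) ;; cocopy X;
  cocopy_unitl : forall X, lunit_inv X ;; (codisc X ** idm X) ;; cocopy X = idm X;
  cocopy_unitr : forall X, runit_inv X ;; (idm X ** codisc X) ;; cocopy X = idm X;
  cocopy_comm : forall X, sym X X ;; cocopy X = cocopy X;
  frobenius1 : forall X, (copy X ** idm X) ;; assoc X X X ;; (idm X ** cocopy X)
                         = cocopy X ;; copy X;
  frobenius2 : forall X, (idm X ** copy X) ;; assoc_inv X X X ;; (cocopy X ** idm X)
                         = cocopy X ;; copy X;
  special : forall X, copy X ;; cocopy X = idm X;
  adj_copy_unit : forall X, le (idm X) (copy X ;; cocopy X);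
  adj_copy_counit : forall X, le (cocopy X ;; copy X) (idm (X (x) X));
  adj_disc_unit : forall X, le (idm X) (disc X ;; codisc X);
  adj_disc_counit : forall X, le (codisc X ;; disc X) (idm unit);
  lax_copy : forall X Y (c : hom base X Y), le (c ;; copy Y) (copy X ;; (c ** c));
  lax_disc : forall X Y (c : hom base X Y), le (c ;; disc Y) (disc X);
  copy_tens : forall X Y, copy (X (x) Y) = (copy X ** copy Y) ;; mid base X Y;
  disc_tens : forall X Y, disc (X (x) Y) = (disc X ** disc Y) ;; lunit unit;
  copy_unit : copy unit = lunit_inv unit;
  disc_unit : disc unit = idm unit;
  cocopy_tens : forall X Y, cocopy (X (x) Y) = midinv base X Y ;; (cocopy X ** cocopy Y);
  codisc_tens : forall X Y, codisc (X (x) Y) = lunit_inv unit ;; (codisc X ** codisc Y);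
  cocopy_unit : cocopy unit = lunit unit;
  codisc_unit : codisc unit = idm unit
}.

Arguments copy {c0}.
Arguments disc {c0}.
Arguments cocopy {c0}.
Arguments codisc {c0}.

Definition is_map {C : CartBicat} {X Y : ob C} (f : hom C X Y) : Prop :=
  f ;; copy Y = copy X ;; (f ** f) /\ f ;; disc Y = disc X.

Definition converse {C : CartBicat} {X Y : ob C} (c : hom C X Y) : hom C Y X :=
  runit_inv Y
  ;; (idm Y ** (codisc X ;; copy X))
  ;; assoc_inv Y X X
  ;; ((idm Y ** c) ** idm X)
  ;; ((cocopy Y ;; disc Y) ** idm X)
  ;; lunit X.

Definition functionally_complete (C : CartBicat) : Prop :=
  forall (X : ob C) (r : hom C X unit),
    exists (Xr : ob C) (i : hom C Xr X),
      is_map i /\ i ;; converse i = idm Xr /\ converse i ;; disc Xr = r.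

(* The doctrine P = C[-,I] on Map(C): P(X) = hom X I ordered by le,
   P_f(a) = f ;; a.  "a is the top element of P(Y)": *)
Definition is_top {C : CartBicat} {Y : ob C} (a : hom C Y unit) : Prop :=
  forall c : hom C Y unit, le c a.

Definition is_comprehension {C : CartBicat} {X : ob C} (a : hom C X unit)
    {Xa : ob C} (i : hom C Xa X) : Prop :=
  is_map i /\ is_top (i ;; a) /\
  forall (Y : ob C) (f : hom C Y X), is_map f -> is_top (f ;; a) ->
    (exists g : hom C Y Xa, is_map g /\ f = g ;; i) /\
    (forall g g' : hom C Y Xa, is_map g -> is_map g' ->
        f = g ;; i -> f = g' ;; i -> g = g').

Definition has_full_comprehensions (C : CartBicat) : Prop :=
  (forall (X : ob C) (a : hom C X unit),
      exists (Xa : ob C) (i : hom C Xa X), is_comprehension a i) /\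
  (forall (X : ob C) (a b : hom C X unit) (Xa Xb : ob C)
          (i : hom C Xa X) (j : hom C Xb X),
      is_comprehension a i -> is_comprehension b j ->
      (exists g : hom C Xa Xb, is_map g /\ i = g ;; j) -> le a b).

From Stdlib Require Import Setoid.

(* For a map [i], the arrow [i ;; i†] is above the identity and [i† ;; i] below it;
   moreover a total arrow below a map equals that map.  Hence a tabulation [i] of
   [r] is a comprehension of [r]: a map [f] with [f ;; r] total factors as
   [(f ;; i†) ;; i], because [f ;; i† ;; i] is total and below [f].  Writing
   [r = i† ;; disc] for a tabulation also gives fullness.
   Conversely let [i] be a comprehension of [r].  Then [i† ;; disc <= r] directly,
   and [r <= i† ;; disc] by fullness, since [i] factors through the comprehension
   of [i† ;; disc].  Bending wires reduces [i ;; i† <= id] to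
   [(i ⊗ i) ;; cap <= cap], which fullness yields once the comprehension [k] of
   [(i ⊗ i) ;; cap] factors through the comprehension of [cap].  This holds
   because the two components of [k] agree: after [i] their meet is total, so
   they coincide, and [i] is monic on maps. *)

Ltac reassoc := repeat rewrite comp_assoc.

Section PosetMonoidal.
Context {C : PSMC}.

Lemma le_compl {X Y Z} (f f' : hom C X Y) (g : hom C Y Z) :
  le f f' -> le (f ;; g) (f' ;; g).
Proof. intros; apply comp_mono; auto using le_refl. Qed.

Lemma le_compr {X Y Z} (f : hom C X Y) (g g' : hom C Y Z) :
  le g g' -> le (f ;; g) (f ;; g').
Proof. intros; apply comp_mono; auto using le_refl. Qed.

Lemma le_tenshl {X Y X' Y'} (f f' : hom C X Y) (g : hom C X' Y') :
  le f f' -> le (f ** g) (f' ** g).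
Proof. intros; apply tensh_mono; auto using le_refl. Qed.

Lemma le_tenshr {X Y X' Y'} (f : hom C X Y) (g g' : hom C X' Y') :
  le g g' -> le (f ** g) (f ** g').
Proof. intros; apply tensh_mono; auto using le_refl. Qed.

Lemma le_unit_l {X Y} (e : hom C X X) (f g : hom C X Y) :
  le (idm X) e -> le (e ;; f) g -> le f g.
Proof.
  intros He Hf. apply (le_trans _ _ _ _ (e ;; f)); auto.
  rewrite <- (comp_idl _ _ _ f) at 1. now apply le_compl.
Qed.

Lemma le_unit_r {X Y} (e : hom C Y Y) (f g : hom C X Y) :
  le (idm Y) e -> le (f ;; e) g -> le f g.
Proof.
  intros He Hf. apply (le_trans _ _ _ _ (f ;; e)); auto.
  rewrite <- (comp_idr _ _ _ f) at 1. now apply le_compr.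
Qed.

Lemma le_counit_r {X Y} (e : hom C Y Y) (f g : hom C X Y) :
  le e (idm Y) -> le f (g ;; e) -> le f g.
Proof.
  intros He Hf. apply (le_trans _ _ _ _ (g ;; e)); auto.
  rewrite <- (comp_idr _ _ _ g) at 2. now apply le_compr.
Qed.

Lemma comp_tensh {X Y Z X' Y' Z'} (f : hom C X Y) (g : hom C Y Z)
    (f' : hom C X' Y') (g' : hom C Y' Z') :
  (f ** f') ;; (g ** g') = (f ;; g) ** (f' ;; g').
Proof. symmetry; apply tensh_comp. Qed.

Lemma tensh_compl {X Y Z W} (f : hom C X Y) (g : hom C Y Z) :
  (f ;; g) ** idm W = (f ** idm W) ;; (g ** idm W).
Proof. now rewrite comp_tensh, comp_idl. Qed.

Lemma tensh_compr {X Y Z W} (f : hom C X Y) (g : hom C Y Z) :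
  idm W ** (f ;; g) = (idm W ** f) ;; (idm W ** g).
Proof. now rewrite comp_tensh, comp_idl. Qed.

Lemma tensh_lr {X Y X' Y'} (f : hom C X Y) (g : hom C X' Y') :
  f ** g = (f ** idm X') ;; (idm Y ** g).
Proof. now rewrite comp_tensh, comp_idl, comp_idr. Qed.

Lemma tensh_rl {X Y X' Y'} (f : hom C X Y) (g : hom C X' Y') :
  f ** g = (idm X ** g) ;; (f ** idm Y').
Proof. now rewrite comp_tensh, comp_idl, comp_idr. Qed.

Lemma tensh_interchange {X Y X' Y'} (f : hom C X Y) (g : hom C X' Y') :
  (f ** idm X') ;; (idm Y ** g) = (idm X ** g) ;; (f ** idm Y').
Proof. now rewrite <- tensh_lr, <- tensh_rl. Qed.

Lemma comp_eq_tail {X Y Y' Z W} {a : hom C X Y} {b : hom C Y Z}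
    {c : hom C X Y'} {d : hom C Y' Z} (e : a ;; b = c ;; d) (k : hom C Z W) :
  a ;; (b ;; k) = c ;; (d ;; k).
Proof. now rewrite <- !comp_assoc, e. Qed.

Lemma comp_eq_tail1 {X Y Z W} {a : hom C X Y} {b : hom C Y Z} {c : hom C X Z}
    (e : a ;; b = c) (k : hom C Z W) :
  a ;; (b ;; k) = c ;; k.
Proof. now rewrite <- comp_assoc, e. Qed.

Lemma runit_inv_nat {X Y} (f : hom C X Y) :
  f ;; runit_inv Y = runit_inv X ;; (f ** idm unit).
Proof.
  rewrite <- (comp_idr _ _ _ (runit_inv X ;; _)), <- (runit_iso1 _ Y).
  rewrite <- comp_assoc, (comp_assoc _ _ _ _ _ (runit_inv X)), runit_nat.
  now rewrite <- comp_assoc, runit_iso2, comp_idl.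
Qed.

Lemma lunit_inv_nat {X Y} (f : hom C X Y) :
  f ;; lunit_inv Y = lunit_inv X ;; (idm unit ** f).
Proof.
  rewrite <- (comp_idr _ _ _ (lunit_inv X ;; _)), <- (lunit_iso1 _ Y).
  rewrite <- comp_assoc, (comp_assoc _ _ _ _ _ (lunit_inv X)), lunit_nat.
  now rewrite <- comp_assoc, lunit_iso2, comp_idl.
Qed.

Lemma assoc_inv_nat {X Y Z X' Y' Z'} (f : hom C X X') (g : hom C Y Y') (h : hom C Z Z') :
  (f ** (g ** h)) ;; assoc_inv X' Y' Z' = assoc_inv X Y Z ;; ((f ** g) ** h).
Proof.
  rewrite <- (comp_idl _ _ _ (_ ;; assoc_inv X' Y' Z')), <- (assoc_iso2 _ X Y Z).
  rewrite (comp_assoc _ _ _ _ _ (assoc_inv X Y Z)).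
  rewrite <- (comp_assoc _ _ _ _ _ (assoc X Y Z)), <- assoc_nat.
  now rewrite !comp_assoc, assoc_iso1, comp_idr.
Qed.

(* [bend Q P] is the string diagram Y ≅ Y ⊗ I --(Y ⊗ Q)--> Y ⊗ (X ⊗ W) ≅ (Y ⊗ X) ⊗ W
   --(P ⊗ W)--> I ⊗ W ≅ W: the cup [Q] feeds the wire X into the cap [P]. *)
Definition bend {Y X W} (Q : hom C unit (X (x) W)) (P : hom C (Y (x) X) unit) : hom C Y W :=
  runit_inv Y ;; (idm Y ** Q) ;; assoc_inv Y X W ;; (P ** idm W) ;; lunit W.

Lemma comp_bend {Y' Y X W} (T : hom C Y' Y) (Q : hom C unit (X (x) W))
    (P : hom C (Y (x) X) unit) :
  T ;; bend Q P = bend Q ((T ** idm X) ;; P).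
Proof.
  unfold bend. rewrite tensh_compl. reassoc.
  rewrite <- (comp_eq_tail (assoc_inv_nat T (idm X) (idm W))), tensh_id.
  rewrite <- (comp_eq_tail (tensh_interchange T Q)).
  now rewrite <- (comp_eq_tail (runit_inv_nat T)).
Qed.

Lemma bend_comp {Y X W W'} (Q : hom C unit (X (x) W)) (P : hom C (Y (x) X) unit)
    (S : hom C W W') :
  bend Q P ;; S = bend (Q ;; (idm X ** S)) P.
Proof.
  unfold bend. rewrite tensh_compr. reassoc.
  rewrite <- lunit_nat, (comp_eq_tail (tensh_interchange P S)).
  rewrite <- (tensh_id _ Y X).
  now rewrite <- (comp_eq_tail (assoc_inv_nat (idm Y) (idm X) S)).
Qed.

Lemma bend_slide {Y X X' W} (Q : hom C unit (X (x) W)) (h : hom C X X')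
    (P : hom C (Y (x) X') unit) :
  bend (Q ;; (h ** idm W)) P = bend Q ((idm Y ** h) ;; P).
Proof.
  unfold bend. rewrite tensh_compr, tensh_compl. reassoc.
  now rewrite (comp_eq_tail (assoc_inv_nat (idm Y) h (idm W))).
Qed.

Lemma bend_mono {Y X W} (Q Q' : hom C unit (X (x) W)) (P P' : hom C (Y (x) X) unit) :
  le Q Q' -> le P P' -> le (bend Q P) (bend Q' P').
Proof.
  intros HQ HP. unfold bend. apply le_compl, comp_mono.
  - now apply le_compl, le_compr, le_tenshr.
  - now apply le_tenshl.
Qed.

Definition interchange (A B D E : ob C) :
  hom C ((A (x) B) (x) (D (x) E)) ((A (x) D) (x) (B (x) E)) :=
  assoc A B (D (x) E)
  ;; (idm A ** assoc_inv B D E)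
  ;; (idm A ** (sym B D ** idm E))
  ;; (idm A ** assoc D B E)
  ;; assoc_inv A D (B (x) E).

Lemma mid_interchange (X Y : ob C) : mid C X Y = interchange X X Y Y.
Proof. reflexivity. Qed.

Lemma tensh_idl_square {A A' B B' D D'} (a : hom C A A') (x : hom C B B')
    (y : hom C B' D) (y' : hom C B D') (x' : hom C D' D) :
  x ;; y = y' ;; x' -> (a ** x) ;; (idm A' ** y) = (idm A ** y') ;; (a ** x').
Proof. intros H. now rewrite !comp_tensh, comp_idl, comp_idr, H. Qed.

Lemma sym_tensh_nat {B B' D D' E E'} (b : hom C B B') (d : hom C D D') (e : hom C E E') :
  ((b ** d) ** e) ;; (sym B' D' ** idm E') = (sym B D ** idm E) ;; ((d ** b) ** e).
Proof. now rewrite !comp_tensh, comp_idl, comp_idr, sym_nat. Qed.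

Lemma interchange_nat {A B D E A' B' D' E'} (a : hom C A A') (b : hom C B B')
    (d : hom C D D') (e : hom C E E') :
  ((a ** b) ** (d ** e)) ;; interchange A' B' D' E'
  = interchange A B D E ;; ((a ** d) ** (b ** e)).
Proof.
  unfold interchange. reassoc.
  rewrite (comp_eq_tail (assoc_nat _ _ _ _ _ _ _ a b (d ** e))).
  rewrite (comp_eq_tail (tensh_idl_square a _ _ _ _ (assoc_inv_nat b d e))).
  rewrite (comp_eq_tail (tensh_idl_square a _ _ _ _ (sym_tensh_nat b d e))).
  rewrite (comp_eq_tail (tensh_idl_square a _ _ _ _ (assoc_nat _ _ _ _ _ _ _ d b e))).
  now rewrite assoc_inv_nat.
Qed.

End PosetMonoidal.

Section CartesianBicategory.
Context {C : CartBicat}.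

Definition cup (X : ob C) : hom C unit (X (x) X) := codisc X ;; copy X.
Definition cap (X : ob C) : hom C (X (x) X) unit := cocopy X ;; disc X.

Definition total {X Y : ob C} (T : hom C X Y) : Prop := le (disc X) (T ;; disc Y).

Lemma converse_bend {X Y : ob C} (c : hom C X Y) :
  converse c = bend (cup X) ((idm Y ** c) ;; cap Y).
Proof. unfold converse, bend, cup, cap. now rewrite !tensh_compl; reassoc. Qed.

Lemma bend_cup_cap (X : ob C) : bend (cup X) (cap X) = idm X.
Proof.
  unfold bend, cup, cap. rewrite tensh_compr, tensh_compl. reassoc.
  transitivity (runit_inv X ;; (idm X ** codisc X) ;; (cocopy X ;; copy X)
                ;; (disc X ** idm X) ;; lunit X).
  { rewrite <- frobenius2. now reassoc. }
  rewrite <- (comp_assoc _ _ _ _ _ _ (cocopy X)), cocopy_unitr, comp_idl.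
  reassoc. now rewrite <- comp_assoc, copy_counitl.
Qed.

Lemma comp_converse {X Y Y' : ob C} (T : hom C Y' Y) (c : hom C X Y) :
  T ;; converse c = bend (cup X) ((T ** c) ;; cap Y).
Proof. now rewrite converse_bend, comp_bend, <- comp_assoc, <- tensh_lr. Qed.

Lemma le_disc {X : ob C} (c : hom C X unit) : le c (disc X).
Proof. rewrite <- (comp_idr _ _ _ c), <- disc_unit. apply lax_disc. Qed.

Lemma codisc_comp_le {X Y : ob C} (c : hom C X Y) : le (codisc X ;; c) (codisc Y).
Proof.
  apply (le_unit_r (disc Y ;; codisc Y)); [apply adj_disc_unit|].
  rewrite <- (comp_idl _ _ _ (codisc Y)) at 2. reassoc.
  rewrite <- (comp_assoc _ _ _ _ _ c), <- comp_assoc.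
  apply le_compl, (le_trans _ _ _ _ (codisc X ;; disc X)).
  - now apply le_compr, lax_disc.
  - apply adj_disc_counit.
Qed.

Lemma cap_le_total {X Y : ob C} (T : hom C X Y) :
  total T -> le (cap X) ((T ** T) ;; cap Y).
Proof.
  intros HT. unfold cap.
  assert (Hspecial : T ;; disc Y = (T ;; copy Y) ;; (cocopy Y ;; disc Y)).
  { now rewrite comp_assoc, <- (comp_assoc _ _ _ _ _ (copy Y)), special, comp_idl. }
  apply (le_trans _ _ _ _ (cocopy X ;; (T ;; disc Y))); [now apply le_compr|].
  rewrite Hspecial.
  apply (le_trans _ _ _ _ (cocopy X ;; ((copy X ;; (T ** T)) ;; (cocopy Y ;; disc Y)))).
  { now apply le_compr, le_compl, lax_copy. }
  rewrite <- (comp_idl _ _ _ ((T ** T) ;; _)). reassoc. rewrite <- comp_assoc.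
  apply le_compl, adj_copy_counit.
Qed.

Lemma total_le_comp_converse {X Y : ob C} (T c : hom C X Y) :
  total T -> le T c -> le (idm X) (T ;; converse c).
Proof.
  intros HT Hc. rewrite <- (bend_cup_cap X), comp_converse.
  apply bend_mono; [apply le_refl|].
  apply (le_trans _ _ _ _ _ _ (cap_le_total T HT)).
  now apply le_compl, le_tenshr.
Qed.

Lemma map_total {X Y : ob C} (f : hom C X Y) : is_map f -> total f.
Proof. intros [_ Hd]. unfold total. rewrite Hd. apply le_refl. Qed.

Lemma map_unit {X Y : ob C} (f : hom C X Y) : is_map f -> le (idm X) (f ;; converse f).
Proof. intros Hf. apply total_le_comp_converse; [now apply map_total | apply le_refl]. Qed.

Lemma map_counit {X Y : ob C} (f : hom C X Y) : is_map f -> le (converse f ;; f) (idm Y).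
Proof.
  intros [Hc _]. rewrite converse_bend, bend_comp, <- bend_slide.
  apply (le_trans _ _ _ _ (bend (cup Y) (cap Y))); [|rewrite bend_cup_cap; apply le_refl].
  apply bend_mono; [|apply le_refl].
  unfold cup. reassoc. rewrite comp_tensh, comp_idl, comp_idr, <- Hc, <- comp_assoc.
  apply le_compl, codisc_comp_le.
Qed.

Lemma total_le_map_eq {X Y : ob C} (T f : hom C X Y) :
  total T -> is_map f -> le T f -> T = f.
Proof.
  intros HT Hf HTf. apply le_antisym; auto.
  apply (le_unit_l (T ;; converse f)); [now apply total_le_comp_converse|].
  reassoc. apply (le_counit_r (converse f ;; f)); [now apply map_counit|].
  apply le_refl.
Qed.

Lemma adjoint_is_map {X Y : ob C} (R : hom C X Y) (S : hom C Y X) :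
  le (idm X) (R ;; S) -> le (S ;; R) (idm Y) -> is_map R.
Proof.
  intros Hunit Hcounit. split; apply le_antisym; [apply lax_copy| |apply lax_disc|].
  - apply (le_unit_l (R ;; S)); auto. reassoc.
    apply (le_trans _ _ _ _ (R ;; ((copy Y ;; (S ** S)) ;; (R ** R)))).
    { rewrite <- (comp_assoc _ _ _ _ _ S). now apply le_compr, le_compl, lax_copy. }
    reassoc. rewrite comp_tensh. apply le_compr.
    rewrite <- (comp_idr _ _ _ (copy Y)) at 2. rewrite <- tensh_id.
    now apply le_compr, tensh_mono.
  - apply (le_unit_l (R ;; S)); auto. reassoc. now apply le_compr, lax_disc.
Qed.

Lemma iso_is_map {X Y : ob C} (u : hom C X Y) (v : hom C Y X) :
  u ;; v = idm X -> v ;; u = idm Y -> is_map u.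
Proof. intros H1 H2. apply (adjoint_is_map u v); [rewrite H1 | rewrite H2]; apply le_refl. Qed.

Lemma map_idm (X : ob C) : is_map (idm X).
Proof. split; now rewrite ?tensh_id, comp_idl, ?comp_idr. Qed.

Lemma map_comp {X Y Z : ob C} (f : hom C X Y) (g : hom C Y Z) :
  is_map f -> is_map g -> is_map (f ;; g).
Proof.
  intros [Fc Fd] [Gc Gd]. split; reassoc.
  - now rewrite Gc, <- comp_assoc, Fc, comp_assoc, comp_tensh.
  - now rewrite Gd.
Qed.

Lemma copy_disc_r (X : ob C) : copy X ;; (idm X ** disc X) = runit_inv X.
Proof.
  rewrite <- (comp_idr _ _ _ (copy X ;; _)), <- (runit_iso1 _ X).
  now rewrite <- comp_assoc, copy_counitr, comp_idl.
Qed.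

Lemma copy_disc_l (X : ob C) : copy X ;; (disc X ** idm X) = lunit_inv X.
Proof.
  rewrite <- (comp_idr _ _ _ (copy X ;; _)), <- (lunit_iso1 _ X).
  now rewrite <- comp_assoc, copy_counitl, comp_idl.
Qed.

Lemma disc_map (X : ob C) : is_map (disc X).
Proof.
  split.
  - now rewrite copy_unit, lunit_inv_nat, (tensh_lr (disc X)), <- comp_assoc, copy_disc_l.
  - now rewrite disc_unit, comp_idr.
Qed.

Lemma sym_unit : sym unit unit = idm (@unit C (x) unit).
Proof.
  assert (H := copy_comm C unit). rewrite copy_unit in H.
  rewrite <- (comp_idl _ _ _ (sym _ _)), <- (lunit_iso1 _ unit).
  now rewrite comp_assoc, H.
Qed.

Lemma interchange_unit (A B : ob C) : interchange A unit unit B = idm _.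
Proof.
  unfold interchange. rewrite sym_unit, !tensh_id, comp_idr. reassoc.
  rewrite (comp_eq_tail1 (comp_tensh (idm A) (idm A) (assoc_inv unit unit B) (assoc unit unit B))).
  rewrite assoc_iso2, comp_idl, !tensh_id, comp_idl.
  apply assoc_iso1.
Qed.

Lemma tensh_map {X Y X' Y' : ob C} (f : hom C X Y) (g : hom C X' Y') :
  is_map f -> is_map g -> is_map (f ** g).
Proof.
  intros [Fc Fd] [Gc Gd]. split.
  - rewrite !copy_tens, !mid_interchange, <- comp_assoc, comp_tensh, Fc, Gc.
    now rewrite <- comp_tensh, comp_assoc, interchange_nat, comp_assoc.
  - now rewrite !disc_tens, <- comp_assoc, comp_tensh, Fd, Gd.
Qed.

Definition proj_l (A B : ob C) : hom C (A (x) B) A := (idm A ** disc B) ;; runit A.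
Definition proj_r (A B : ob C) : hom C (A (x) B) B := (disc A ** idm B) ;; lunit B.

Lemma proj_l_map (A B : ob C) : is_map (proj_l A B).
Proof.
  apply map_comp; [apply tensh_map; [apply map_idm | apply disc_map]|].
  apply (iso_is_map _ (runit_inv A)); [apply runit_iso1 | apply runit_iso2].
Qed.

Lemma proj_r_map (A B : ob C) : is_map (proj_r A B).
Proof.
  apply map_comp; [apply tensh_map; [apply disc_map | apply map_idm]|].
  apply (iso_is_map _ (lunit_inv B)); [apply lunit_iso1 | apply lunit_iso2].
Qed.

Lemma copy_proj (A B : ob C) : copy (A (x) B) ;; (proj_l A B ** proj_r A B) = idm _.
Proof.
  rewrite copy_tens, mid_interchange. unfold proj_l, proj_r. rewrite <- comp_tensh. reassoc.
  rewrite <- (comp_assoc _ _ _ _ _ (interchange _ _ _ _)), <- interchange_nat.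
  rewrite interchange_unit, comp_idr, <- comp_assoc, comp_tensh, copy_disc_r, copy_disc_l.
  now rewrite comp_tensh, runit_iso2, lunit_iso2, tensh_id.
Qed.

Lemma map_pairing {K A B : ob C} (k : hom C K (A (x) B)) :
  is_map k -> k = copy K ;; ((k ;; proj_l A B) ** (k ;; proj_r A B)).
Proof.
  intros [Hk _]. rewrite <- comp_tensh, <- comp_assoc, <- Hk, comp_assoc.
  now rewrite copy_proj, comp_idr.
Qed.

Definition meet {K X : ob C} (u v : hom C K X) : hom C K X :=
  copy K ;; (u ** v) ;; cocopy X.

Lemma meet_comm {K X : ob C} (u v : hom C K X) : meet u v = meet v u.
Proof.
  unfold meet. rewrite <- (copy_comm C K) at 1. rewrite <- (cocopy_comm C X) at 1. reassoc.
  rewrite <- (comp_eq_tail (sym_nat _ _ _ _ _ v u)), (comp_eq_tail1 (sym_inv _ X X)).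
  now rewrite comp_idl.
Qed.

Lemma meet_le_l {K X : ob C} (u v : hom C K X) : is_map v -> le (meet u v) u.
Proof.
  intros [_ Hvd]. unfold meet.
  rewrite <- (comp_idr _ _ _ (_ ;; cocopy X)), <- (copy_counitr C X). reassoc.
  apply (le_trans _ _ _ _ (copy K ;; ((u ** v) ;; ((idm X ** disc X) ;; runit X)))).
  { apply le_compr, le_compr. rewrite <- (comp_assoc _ _ _ _ _ (cocopy X)).
    rewrite <- (comp_idl _ _ _ ((idm X ** disc X) ;; _)) at 2. apply le_compl, adj_copy_counit. }
  rewrite (comp_eq_tail1 (comp_tensh u (idm X) v (disc X))), comp_idr, Hvd, tensh_rl.
  reassoc. rewrite runit_nat, (comp_eq_tail1 (copy_disc_r K)), (comp_eq_tail1 (runit_iso2 _ K)).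
  rewrite comp_idl. apply le_refl.
Qed.

Lemma meet_le_r {K X : ob C} (u v : hom C K X) : is_map u -> le (meet u v) v.
Proof. rewrite meet_comm. apply meet_le_l. Qed.

Lemma total_meet_eq {K X : ob C} (u v : hom C K X) :
  is_map u -> is_map v -> total (meet u v) -> u = v.
Proof.
  intros Hu Hv Htot.
  rewrite <- (total_le_map_eq _ u Htot Hu (meet_le_l u v Hv)).
  exact (total_le_map_eq _ v Htot Hv (meet_le_r u v Hu)).
Qed.

Lemma is_topP {Y : ob C} (a : hom C Y unit) : is_top a <-> le (disc Y) a.
Proof.
  split; [intros Ha; apply Ha|].
  intros Ha c. exact (le_trans _ _ _ _ _ _ (le_disc c) Ha).
Qed.

Lemma map_top {Y X : ob C} (m : hom C Y X) (a : hom C X unit) :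
  is_map m -> is_top a -> is_top (m ;; a).
Proof.
  intros [_ Hd] Ha. apply is_topP. rewrite <- Hd. now apply le_compr, is_topP.
Qed.

Lemma converse_disc_le {X Y : ob C} (i : hom C Y X) (b : hom C X unit) :
  is_map i -> is_top (i ;; b) -> le (converse i ;; disc Y) b.
Proof.
  intros Hi Hib. apply (le_trans _ _ _ _ (converse i ;; (i ;; b))).
  - now apply le_compr, is_topP.
  - rewrite <- comp_assoc. rewrite <- (comp_idl _ _ _ b) at 2. now apply le_compl, map_counit.
Qed.

Lemma comprehension_cancel {X Xa Y : ob C} (a : hom C X unit) (i : hom C Xa X)
    (g g' : hom C Y Xa) :
  is_comprehension a i -> is_map g -> is_map g' -> g ;; i = g' ;; i -> g = g'.
Proof.
  intros (Hi & Hia & Hfactor) Hg Hg' E.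
  assert (Htop : is_top (g ;; i ;; a)) by (rewrite comp_assoc; now apply map_top).
  destruct (Hfactor Y (g ;; i) (map_comp g i Hg Hi) Htop) as [_ Huniq].
  now apply Huniq.
Qed.

Lemma tabulation_is_comprehension {X Xa : ob C} (a : hom C X unit) (i : hom C Xa X) :
  is_map i -> i ;; converse i = idm Xa -> converse i ;; disc Xa = a ->
  is_comprehension a i.
Proof.
  intros Hi Hret Ha. split; [exact Hi|]. split.
  { apply is_topP. now rewrite <- Ha, <- comp_assoc, Hret, comp_idl; apply le_refl. }
  intros Y f Hf Hfa. split.
  - assert (Hfactor : f ;; converse i ;; i = f).
    { apply total_le_map_eq; auto.
      - unfold total. reassoc. destruct Hi as [_ ->]. rewrite Ha. apply Hfa.
      - reassoc. apply (le_counit_r (converse i ;; i)); [now apply map_counit|].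
        apply le_refl. }
    exists (f ;; converse i). split; [|now rewrite Hfactor].
    apply (adjoint_is_map _ (i ;; converse f)).
    + rewrite <- comp_assoc, Hfactor. now apply map_unit.
    + reassoc. rewrite <- (comp_assoc _ _ _ _ _ (converse f)).
      rewrite <- Hret. apply le_compr.
      rewrite <- (comp_idl _ _ _ (converse i)) at 2. now apply le_compl, map_counit.
  - intros g g' _ _ Hg Hg'.
    rewrite <- (comp_idr _ _ _ g), <- (comp_idr _ _ _ g'), <- Hret, <- !comp_assoc.
    now rewrite <- Hg, <- Hg'.
Qed.

Lemma functionally_complete_has_full_comprehensions :
  functionally_complete C -> has_full_comprehensions C.
Proof.
  intros FC. split.
  - intros X a. destruct (FC X a) as (Xa & i & Hi & Hret & Ha).
    exists Xa, i. now apply tabulation_is_comprehension.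
  - intros X a b Xa Xb i j (_ & _ & Hfactor) (Hj & Hjb & _) (g & Hg & Eg).
    destruct (FC X a) as (Xt & t & Ht & Hret & Ha).
    destruct (tabulation_is_comprehension a t Ht Hret Ha) as (_ & Hta & _).
    destruct (Hfactor _ t Ht Hta) as [(h & Hh & Eh) _].
    rewrite <- Ha. apply converse_disc_le; [exact Ht|].
    rewrite Eh, Eg, <- comp_assoc, comp_assoc.
    apply map_top; [now apply map_comp | exact Hjb].
Qed.

End CartesianBicategory.

Section FullComprehensions.
Variable C : CartBicat.
Hypothesis comprehension_exists :
  forall (X : ob C) (a : hom C X unit), exists (Xa : ob C) (i : hom C Xa X), is_comprehension a i.
Hypothesis comprehension_full :
  forall (X : ob C) (a b : hom C X unit) (Xa Xb : ob C) (i : hom C Xa X) (j : hom C Xb X),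
    is_comprehension a i -> is_comprehension b j ->
    (exists g : hom C Xa Xb, is_map g /\ i = g ;; j) -> le a b.

Lemma comprehension_cap_le {X Xr : ob C} (r : hom C X unit) (i : hom C Xr X) :
  is_comprehension r i -> le ((i ** i) ;; cap X) (cap Xr).
Proof.
  intros Hci.
  destruct (comprehension_exists _ ((i ** i) ;; cap X)) as (K & k & Hck).
  destruct (comprehension_exists _ (cap Xr)) as (D & d & Hcd).
  apply (comprehension_full _ _ _ _ _ k d Hck Hcd).
  destruct Hck as (Hk & Hkcap & _). destruct Hcd as (_ & _ & Hfactor).
  pose proof (proj1 Hci) as Hi.
  set (g := k ;; proj_l Xr Xr). set (g' := k ;; proj_r Xr Xr).
  assert (Hg : is_map g) by (apply map_comp; auto using proj_l_map).
  assert (Hg' : is_map g') by (apply map_comp; auto using proj_r_map).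
  assert (Ek : k = copy K ;; (g ** g')) by now apply map_pairing.
  assert (Egg' : g = g').
  { apply (comprehension_cancel r i g g' Hci Hg Hg').
    apply total_meet_eq; try now apply map_comp.
    unfold total, meet. rewrite <- comp_tensh. reassoc.
    rewrite Ek in Hkcap. unfold cap in Hkcap. rewrite !comp_assoc in Hkcap.
    exact (Hkcap (disc K)). }
  assert (Hkcap' : is_top (k ;; cap Xr)).
  { apply is_topP. rewrite Ek, <- Egg'. destruct Hg as [Hgc Hgd].
    rewrite <- Hgc. unfold cap. reassoc.
    rewrite (comp_eq_tail1 (special C Xr)), comp_idl, Hgd. apply le_refl. }
  destruct (Hfactor _ k Hk Hkcap') as [(h & Hh & Eh) _].
  now exists h.
Qed.

Lemma comprehension_retract {X Xr : ob C} (r : hom C X unit) (i : hom C Xr X) :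
  is_comprehension r i -> i ;; converse i = idm Xr.
Proof.
  intros Hci. apply le_antisym; [|now apply map_unit, Hci].
  rewrite comp_converse, <- (bend_cup_cap Xr).
  apply bend_mono; [apply le_refl | now apply (comprehension_cap_le r)].
Qed.

Lemma comprehension_converse_disc {X Xr : ob C} (r : hom C X unit) (i : hom C Xr X) :
  is_comprehension r i -> converse i ;; disc Xr = r.
Proof.
  intros Hci. pose proof Hci as (Hi & Hir & _). apply le_antisym.
  - now apply converse_disc_le.
  - destruct (comprehension_exists _ (converse i ;; disc Xr)) as (B & j & Hcj).
    apply (comprehension_full _ _ _ _ _ i j Hci Hcj).
    pose proof Hcj as (_ & _ & Hfactor).
    assert (Htop : is_top (i ;; (converse i ;; disc Xr))).
    { apply is_topP. rewrite <- comp_assoc, <- (comp_idl _ _ _ (disc Xr)) at 1.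
      now apply le_compl, map_unit. }
    destruct (Hfactor _ i Hi Htop) as [(g & Hg & Eg) _].
    now exists g.
Qed.

Lemma full_comprehensions_functionally_complete : functionally_complete C.
Proof.
  intros X r. destruct (comprehension_exists X r) as (Xr & i & Hci).
  exists Xr, i. split; [apply Hci|]. split.
  - now apply (comprehension_retract r).
  - now apply comprehension_converse_disc.
Qed.

End FullComprehensions.

Theorem theorem41 (C : CartBicat) :
  functionally_complete C <-> has_full_comprehensions C.
Proof.
  split.
  - apply functionally_complete_has_full_comprehensions.
  - intros [Hex Hfull]. exact (full_comprehensions_functionally_complete C Hex Hfull).
Qed.
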